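(* Let $a\in\mathbb{R}$ with $a>5$ and $n\in\mathbb{N}$. Let $E_n(a,1)$ be the $(n+1)\times n$ matrix whose $(i,j)$ entry is $-a$ if $i=j$, $1$ if $j=i+1$, $a$ if $i=j+1$, $-1$ if $i=j+2$, and $0$ otherwise. Then for every $1\le k\le n+1$, the $n\times n$ matrix $E_n^k(a,1)$ obtained by deleting the $k$-th row of $E_n(a,1)$ is invertible; that is, all order-$n$ minors of $E_n(a,1)$ are nonzero. *)

(* Indices are 0-based ordinals; the paper's 1-based (i,j)
   conditions i=j, j=i+1, i=j+1, i=j+2 are invariant under the shift. *)
From mathcomp Require Import all_boot all_order all_algebra.
From mathcomp Require Import reals.
Set Implicit Arguments. Unset Strict Implicit. Unset Printing Implicit Defensive.
Import Order.TTheory GRing.Theory Num.Theory.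
Local Open Scope ring_scope.

Definition Emx (R : pzRingType) (n : nat) (a : R) : 'M[R]_(n.+1, n) :=
  \matrix_(i < n.+1, j < n)
    (if i == j :> nat then - a
     else if j == i.+1 :> nat then 1
     else if i == j.+1 :> nat then a
     else if i == j.+2 :> nat then -1
     else 0).

Definition Edel (R : pzRingType) (n : nat) (a : R) (k : 'I_n.+1) : 'M[R]_n :=
  \matrix_(i < n, j < n) Emx n a (lift k i) j.

From mathcomp Require Import all_boot all_order all_algebra.
From mathcomp Require Import reals ring lra zify.
Set Implicit Arguments.
Unset Strict Implicit.
Unset Printing Implicit Defensive.

Import Order.TTheory GRing.Theory Num.Theory.
Local Open Scope ring_scope.

(* Read c : 'cV_n as the polynomial c(X) of degree < n. The entries of
   E_n(a,1) c are the coefficients of X^1, ..., X^(n+1) in q(X) c(X), where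
   q = 1 - aX + aX^2 - X^3 = (1 - X)(X^2 - (a - 1)X + 1). So if c is in the
   kernel of E_n^k(a,1), then q c = x + w X^(k+1) + z X^(n+2) is a trinomial.
   For a > 3, q has the roots 1, l and 1/l with l > 1, and a trinomial
   x + y X^p + z X^r with 0 < p < r vanishing at these three points is zero;
   hence q c = 0 and c = 0. *)

Lemma sumr_ord_widen (V : nmodType) (m N : nat) (F : nat -> V) :
  (m <= N)%N -> (forall j, (m <= j)%N -> F j = 0) ->
  \sum_(j < m) F j = \sum_(j < N) F j.
Proof.
move=> hmN hF; rewrite (big_ord_widen _ _ hmN) big_mkcond.
by apply: eq_bigr => j _; case: ltnP => // /hF.
Qed.

Definition Epoly {R : nzRingType} (a : R) : {poly R} := Poly [:: 1; - a; a; -1].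

Section Emx_poly.
Variables (R : comNzRingType) (n : nat) (a : R).

Lemma horner_Epoly (t : R) : (Epoly a).[t] = 1 - a * t + a * t ^+ 2 - t ^+ 3.
Proof. by rewrite horner_Poly /=; ring. Qed.

Lemma Epoly_neq0 : Epoly a != 0.
Proof.
apply/eqP => /(congr1 (fun p : {poly R} => p`_0)).
by rewrite coef_Poly coef0 /=; apply/eqP; rewrite oner_eq0.
Qed.

Lemma root_Epoly1 : root (Epoly a) 1.
Proof. by rewrite /root horner_Epoly; apply/eqP; ring. Qed.

Lemma Emx_coef (i : 'I_n.+1) (j : 'I_n) :
  Emx n a i j = if (j <= i.+1)%N then (Epoly a)`_(i.+1 - j) else 0.
Proof.
rewrite mxE coef_Poly; case: leqP => hj.
  case hd: (i.+1 - j)%N => [|[|[|[|d]]]] /=; rewrite ?nth_nil;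
  by repeat case: eqP => ? //; lia.
by repeat case: eqP => ? //; lia.
Qed.

Lemma coef_rVpoly_ge (v : 'rV[R]_n) (j : nat) : (n <= j)%N -> (rVpoly v)`_j = 0.
Proof. by move=> hj; rewrite coef_rVpoly insubN // -leqNgt. Qed.

Lemma mulmx_Emx_coef (c : 'cV[R]_n) (i : 'I_n.+1) :
  (Emx n a *m c) i 0 = (Epoly a * rVpoly c^T)`_i.+1.
Proof.
set C := rVpoly c^T.
pose F j := (if (j <= i.+1)%N then (Epoly a)`_(i.+1 - j) else 0) * C`_j.
rewrite mxE coefMr.
rewrite (eq_bigr (fun j : 'I_n => F j)); last first.
  by move=> j _; rewrite /F Emx_coef coef_rVpoly_ord mxE.
rewrite [RHS](eq_bigr (fun j : 'I_i.+2 => F j)); last first.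
  by move=> j _; rewrite /F -ltnS ltn_ord.
rewrite (@sumr_ord_widen _ _ (n + i.+2)) ?leq_addr //; last first.
  by move=> j hj; rewrite /F coef_rVpoly_ge ?mulr0.
rewrite [RHS](@sumr_ord_widen _ _ (n + i.+2)) ?leq_addl // => j hj.
by rewrite /F leqNgt hj mul0r.
Qed.

End Emx_poly.

Section EdelKernel.
Variables (R : comNzRingType) (n : nat) (a : R) (k : 'I_n.+1) (c : 'cV[R]_n).
Hypothesis hc : Edel a k *m c = 0.

Lemma Edel_rowsub : Edel a k = rowsub (lift k) (Emx n a).
Proof. by apply/matrixP => i j; rewrite !mxE. Qed.

Lemma mulmx_Emx_Edel_kernel (i : 'I_n.+1) : i != k -> (Emx n a *m c) i 0 = 0.
Proof.
case: (unliftP k i) => [j -> _|->]; last by rewrite eqxx.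
by move/matrixP/(_ j 0): hc; rewrite Edel_rowsub mul_rowsub_mx !mxE.
Qed.

Lemma Epoly_mul_Edel_kernel (P := Epoly a * rVpoly c^T) :
  P = (P`_0)%:P + (Emx n a *m c) k 0 *: 'X^(k.+1) + P`_n.+2 *: 'X^(n.+2).
Proof.
have szP : (size P <= n.+3)%N.
  apply: leq_trans (size_polyMleq _ _) _; rewrite -subn1 leq_subLR.
  exact: leq_add (size_Poly _) (size_poly _ _).
rewrite -{1}(coefK P) poly_def.
rewrite (@sumr_ord_widen _ _ n.+3 (fun i => P`_i *: 'X^i)) //; last first.
  by move=> j hj; rewrite nth_default ?scale0r.
rewrite big_ord_recl big_ord_recr /= (bigD1 k) //= big1 ?addr0 => [|i hik].
  by rewrite /bump /= !add1n expr0 alg_polyC addrA mulmx_Emx_coef.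
by rewrite /bump add1n -mulmx_Emx_coef mulmx_Emx_Edel_kernel ?scale0r.
Qed.
End EdelKernel.

Lemma root_EpolyV (R : fieldType) (a t : R) : root (Epoly a) t -> root (Epoly a) t^-1.
Proof.
rewrite /root !horner_Epoly => /eqP ht.
have t0 : t != 0.
  apply: contra_eq_neq ht => ->.
  by rewrite !(mulr0, exprS, mul0r, subr0, addr0) oner_neq0.
apply/eqP; transitivity (- (1 - a * t + a * t ^+ 2 - t ^+ 3) / t ^+ 3); first by field.
by rewrite ht oppr0 mul0r.
Qed.

Lemma Epoly_root_gt1 (R : rcfType) (a : R) : 3 < a -> exists2 l, 1 < l & root (Epoly a) l.
Proof.
move=> ha; set s := a - 1; set d := Num.sqrt (s ^+ 2 - 4).
have d0 : 0 <= d := sqrtr_ge0 _.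
have d2 : d ^+ 2 = s ^+ 2 - 4 by rewrite sqr_sqrtr //; rewrite /s; nra.
exists ((s + d) / 2); first by rewrite /s; lra.
rewrite /root horner_Epoly.
have -> : 1 - a * ((s + d) / 2) + a * ((s + d) / 2) ^+ 2 - ((s + d) / 2) ^+ 3
        = (2 - s - d) * (d ^+ 2 - (s ^+ 2 - 4)) / 8 by rewrite /s; field.
by rewrite d2 subrr mulr0 mul0r.
Qed.

Lemma trinomial_roots_eq0 (R : realFieldType) (l x y z : R) (p r : nat)
    (T := x%:P + y *: 'X^p + z *: 'X^r) :
  1 < l -> (0 < p < r)%N -> root T 1 -> root T l -> root T l^-1 ->
  [/\ x = 0, y = 0 & z = 0].
Proof.
move=> l1 /andP[p0 pr]; rewrite /root /T !hornerE !expr1n !mulr1.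
move=> /eqP e1 /eqP el /eqP ei.
set P := l ^+ p in el ei; set D := l ^+ (r - p).
have lr : l ^+ r = P * D by rewrite -exprD subnKC // ltnW.
have P1 : 1 < P by rewrite exprn_egt1 // -lt0n.
have D1 : 1 < D by rewrite exprn_egt1 // subn_eq0 -ltnNge.
rewrite lr in el; rewrite !exprVn lr -/P in ei.
have eV : x * (P * D) + y * D + z = 0.
  transitivity ((x + y * P^-1 + z * (P * D)^-1) * (P * D)); last by rewrite ei mul0r.
  by field; rewrite (gt_eqF (lt_trans ltr01 D1)) (gt_eqF (lt_trans ltr01 P1)).
have y0 : y = 0.
  have : y * ((P - 1) * (1 - D)) = 0.
    transitivity ((x + y * P + z * (P * D)) - (x + y + z)
                  + (x * (P * D) + y * D + z) - P * D * (x + y + z)); first by ring.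
    by rewrite el e1 eV !(mulr0, subr0, addr0).
  by move/eqP; rewrite !mulf_eq0 !subr_eq0 (gt_eqF P1) (lt_eqF D1) !orbF => /eqP.
have z0 : z = 0.
  have : z * (P * D - 1) = 0.
    transitivity ((x + y * P + z * (P * D)) - (x + y + z)); first by rewrite y0; ring.
    by rewrite el e1 subrr.
  have PD1 : 1 < P * D by nra.
  by move/eqP; rewrite mulf_eq0 subr_eq0 (gt_eqF PD1) orbF => /eqP.
by split=> //; move: e1; rewrite y0 z0 !addr0.
Qed.

Lemma Edel_kernel_eq0 (R : rcfType) (n : nat) (a : R) (k : 'I_n.+1) (c : 'cV[R]_n) :
  3 < a -> Edel a k *m c = 0 -> c = 0.
Proof.
move=> ha hc; set P := Epoly a * rVpoly c^T.
have PT := Epoly_mul_Edel_kernel hc; rewrite -/P in PT.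
have rootP t : root (Epoly a) t -> root P t.
  by rewrite /root hornerM => /eqP ->; rewrite mul0r.
rewrite PT in rootP.
have [l l1 rl] := Epoly_root_gt1 ha.
have kn : (0 < k.+1 < n.+2)%N by rewrite /= ltnS ltn_ord.
have [P0 w0 Pn0] := trinomial_roots_eq0 l1 kn (rootP _ (root_Epoly1 a))
  (rootP _ rl) (rootP _ (root_EpolyV rl)).
have /eqP : P = 0 by rewrite PT P0 w0 Pn0 !scale0r !addr0.
rewrite mulf_eq0 (negbTE (Epoly_neq0 a)) /= => /eqP /(congr1 (@poly_rV _ n)).
by rewrite rVpolyK linear0 => /(congr1 trmx); rewrite trmxK trmx0.
Qed.

Theorem proposition4p2 (R : realType) (a : R) (n : nat) (ha : 5 < a) :
  forall k : 'I_n.+1, @Edel R n a k \in unitmx.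
Proof.
have ha3 : 3 < a by lra.
move=> k; rewrite -unitmx_tr -row_free_unit; apply/inj_row_free => v.
move/(congr1 trmx); rewrite trmx_mul trmxK trmx0 => /(Edel_kernel_eq0 ha3) vT0.
by rewrite -[v]trmxK vT0 trmx0.
Qed.
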